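(* Let $n\ge4$, let $\sigma,\tau\in\Sigma_n$, let $\mathbf A\in\mathcal G_n$, and let $\mathbf X=D^\sigma(\mathbf A)$ and $\mathbf X'=D^\tau(\mathbf A)$ (both with underlying set $\mathcal G_n(\mathbf A,\mathbf C_n)$). Then (i) the relations $\simeq^\sigma_{\mathbf X}$ and $\simeq^\tau_{\mathbf X'}$ coincide; (ii) the relations $\le^\sigma_{\mathbf X}$ and $\le^\tau_{\mathbf X'}$ coincide. Moreover, for every $\sigma\in\Sigma_n$, $\le^\sigma_{\mathbf X}$ is a partial order on $X/{\simeq^\sigma_{\mathbf X}}$ of depth at most $n-2$, whose covering relation is $\prec^\sigma_{\mathbf X}$.
   Context: $\mathbf C_n$ is the Heyting algebra on the chain $\{0<1<\dots<n-1\}$, with min, max, $\bot=0$, $\top=n-1$, $a\to b=\top$ if $a\le b$, $a\to b=b$ if $b<a$. $\mathcal G_n$ is the class of algebras isomorphic to subalgebras of direct powers of $\mathbf C_n$; $\mathcal G_n(\mathbf A,\mathbf C_n)$ is the set of Heyting homomorphisms $\mathbf A\to\mathbf C_n$. For $n\ge4$: for $1\le i\le n-2$, $h_i$ is the endomorphism of $\mathbf C_n$ with $h_i(k)=k+1$ if $i\le k<n-1$ and $h_i(k)=k$ otherwise. For $1\le i\le n-3$, $g_i$ is the partial map with domain $C_n\setminus\{i\}$ with $g_i(i+1)=i$ and $g_i(k)=k$ for $k\notin\{i,i+1\}$, and $f_i\colon C_n\setminus\{i+1\}\to C_n\setminus\{i\}$ is its inverse. $\Sigma_n=\{f_1,g_1\}\times\dots\times\{f_{n-3},g_{n-3}\}\times\{h_1,\dots,h_{n-2}\}$,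 elements written $\sigma=(\sigma_1,\dots,\sigma_{n-2})$. $D^\sigma(\mathbf A)$ is the set $\mathcal G_n(\mathbf A,\mathbf C_n)$ (with the topology inherited from the product of discrete spaces $C_n^A$) equipped with the lifted (partial) operations $\sigma_i^{\mathbf X}(x)=\sigma_i\circ x$, defined iff $\operatorname{ran}x\subseteq\operatorname{dom}\sigma_i$. For such $\mathbf X$: $x\simeq^\sigma_{\mathbf X}y$ iff $x=y$ or there is a finite sequence $x=z_0,\dots,z_N=y$ in $X$ such that for each $j<N$ some $i_j\in\{1,\dots,n-3\}$ satisfies $z_{j+1}=\sigma_{i_j}^{\mathbf X}(z_j)$ or $z_j=\sigma_{i_j}^{\mathbf X}(z_{j+1})$; this is an equivalence relation, with classes $[x]$. On $X/{\simeq^\sigma_{\mathbf X}}$ define $[x]\prec^\sigma_{\mathbf X}[y]$ iff $x\not\simeq^\sigma_{\mathbf X}y$ and there exists $z\simeq^\sigma_{\mathbf X}x$ with $\sigma_{n-2}^{\mathbf X}(z)\simeq^\sigma_{\mathbf X}y$; $\le^\sigma_{\mathbf X}$ is the reflexive transitive closure of $\prec^\sigma_{\mathbf X}$. Depth: in a poset $P$ where no ${\uparrow}p$ contains an infinite ascending chain, $d(p)=\max\{|C|-1: C\subseteq{\uparrow}p \text{ a chain}\}$, and the depth of $P$ is $\sup_p d(p)$. *)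

From Stdlib Require Import Arith Bool Relations.

(* Signature of a Heyting algebra: carrier with meet, join, implication,
   bottom and top.  (Being a Heyting algebra follows from membership in G_n.) *)
Record HSig := {
  carrier :> Type;
  hmeet : carrier -> carrier -> carrier;
  hjoin : carrier -> carrier -> carrier;
  himp  : carrier -> carrier -> carrier;
  hbot  : carrier;
  htop  : carrier }.

(* The chain C_n on {0,...,n-1}. *)
Definition Cimp (n a b : nat) : nat := if a <=? b then n - 1 else b.

Definition is_hom (n : nat) (A : HSig) (x : A -> nat) : Prop :=
  (forall a, x a < n) /\
  x (hbot A) = 0 /\ x (htop A) = n - 1 /\
  (forall a b, x (hmeet A a b) = Nat.min (x a) (x b)) /\
  (forall a b, x (hjoin A a b) = Nat.max (x a) (x b)) /\
  (forall a b, x (himp A a b) = Cimp n (x a) (x b)).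

(* A is in G_n: A embeds (injectively, homomorphically) into a direct power
   C_n^I; the pointwise operations make e a homomorphism iff every coordinate
   projection composed with e is a homomorphism. *)
Definition in_Gn (n : nat) (A : HSig) : Prop :=
  exists (I : Type) (e : A -> I -> nat),
    (forall a b, e a = e b -> a = b) /\
    (forall i, is_hom n A (fun a => e a i)).

(* Partial maps on C_n, encoded with option (None = outside the domain). *)
Definition gmap (i k : nat) : option nat :=
  if k =? i then None else if k =? i + 1 then Some i else Some k.
Definition fmap (i k : nat) : option nat :=
  if k =? i + 1 then None else if k =? i then Some (i + 1) else Some k.
Definition hmap (n i k : nat) : nat :=
  if (i <=? k) && (k <? n - 1) then k + 1 else k.

(* sigma = (sigma_1,...,sigma_{n-2}) in Sigma_n is encoded by
   fs : nat -> bool (fs i = true means sigma_i = f_i, false means g_i,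
   only 1 <= i <= n-3 matter) and k with 1 <= k <= n-2 (sigma_{n-2} = h_k). *)
Definition sig_i (fs : nat -> bool) (i : nat) : nat -> option nat :=
  if fs i then fmap i else gmap i.

(* y = p^X(x): ran x is inside dom p and y = p o x. *)
Definition lifted (A : HSig) (p : nat -> option nat) (x y : A -> nat) : Prop :=
  forall a, p (x a) = Some (y a).

Definition step (n : nat) (A : HSig) (fs : nat -> bool) (x y : A -> nat) : Prop :=
  is_hom n A x /\ is_hom n A y /\
  exists i, 1 <= i <= n - 3 /\
    (lifted A (sig_i fs i) x y \/ lifted A (sig_i fs i) y x).

Definition sim (n : nat) (A : HSig) (fs : nat -> bool) : relation (A -> nat) :=
  clos_refl_trans (A -> nat) (step n A fs).

(* [x] prec^sigma_X [y], expressed on representatives *)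
Definition prec (n : nat) (A : HSig) (fs : nat -> bool) (k : nat)
  (x y : A -> nat) : Prop :=
  ~ sim n A fs x y /\
  exists z, is_hom n A z /\ sim n A fs z x /\
    sim n A fs (fun a => hmap n k (z a)) y.

Definition le (n : nat) (A : HSig) (fs : nat -> bool) (k : nat)
  : relation (A -> nat) :=
  clos_refl_trans (A -> nat) (fun u v => sim n A fs u v \/ prec n A fs k u v).

From Stdlib Require Import Arith Relations Lia List Wf_nat.
From Stdlib Require Import Classical ClassicalEpsilon FunctionalExtensionality FinFun.

(* Everything is governed by the top fibre  T(x) = x^{-1}(n-1)  of a
   homomorphism x : A -> C_n.
   1. A homomorphism can be post-composed with any self-map of C_n that fixes
      0 and n-1, is monotone on its range and strictly monotone there below
      n-1 (hom_postcomp).  This gives the homomorphisms "close the gap at i",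
      "truncate at level j", "raise level u to n-2" and h_k o x.
   2. simeq^sigma is "same top fibre" (sim_iff_same_top): each sigma_i fixes
      n-1 and nothing else is sent to n-1, so steps preserve T; conversely,
      closing a gap strictly lowers the sum of the occupied levels, so every
      x is simeq to a gapless homomorphism, and a gapless homomorphism is
      determined by its top fibre.
   3. <=^sigma is inclusion of top fibres (le_iff_top_incl): h_k preserves the
      top; conversely if T(x) is inside T(y) then T(y) = {a | j <= x a} for a
      threshold j, and x reaches "x truncated at j" by prec-steps lowering the
      truncation level one at a time (one_level_prec).
   Neither description mentions sigma, which gives (i) and (ii); the classes
   above [x] are the truncations of x, indexed by a threshold in 1..n-1, which
   bounds the depth; and [x] prec [y] holds exactly when x has a single level
   between the threshold of y and n-2, which is the covering condition. *)

Ltac split_comparisons :=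
  repeat match goal with
  | |- context [?a =? ?b] => destruct (Nat.eqb_spec a b)
  | |- context [?a <=? ?b] => destruct (Nat.leb_spec a b)
  | |- context [?a <? ?b] => destruct (Nat.ltb_spec a b)
  end; simpl.
Ltac nat_cases := split_comparisons; lia.

Fixpoint msum (f : nat -> nat) (N : nat) : nat :=
  match N with 0 => 0 | S N' => msum f N' + f N' end.

Lemma msum_balance f g f' g' N :
  (forall v, v < N -> f v + g v = f' v + g' v) ->
  msum f N + msum g N = msum f' N + msum g' N.
Proof.
  induction N as [|N IH]; intros H; simpl; [reflexivity|].
  assert (Hlow := IH (fun v Hv => H v (Nat.lt_lt_succ_r _ _ Hv))).
  specialize (H N (Nat.lt_succ_diag_r N)). lia.
Qed.

Lemma msum_single c i N :
  msum (fun v => if v =? i then c else 0) N = if i <? N then c else 0.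
Proof. induction N as [|N IH]; simpl; [reflexivity|]. rewrite IH. nat_cases. Qed.

Lemma pigeonhole m N (f : nat -> nat) :
  (forall i, i < m -> f i < N) ->
  (forall i i', i < m -> i' < m -> f i = f i' -> i = i') -> m <= N.
Proof.
  intros Hrange Hinj.
  rewrite <- (length_seq m 0), <- (length_map f), <- (length_seq N 0).
  apply NoDup_incl_length.
  - apply Injective_map_NoDup_in; [|apply seq_NoDup].
    intros i i' Hi Hi'; apply in_seq in Hi, Hi'; apply Hinj; lia.
  - intros v Hv. apply in_map_iff in Hv as [i [<- Hi]]. apply in_seq in Hi.
    apply in_seq. specialize (Hrange i). lia.
Qed.

Section Homomorphisms.
Variables (n : nat) (A : HSig).

Definition same_top (x y : A -> nat) : Prop :=
  forall a, x a = n - 1 <-> y a = n - 1.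
Definition top_incl (x y : A -> nat) : Prop :=
  forall a, x a = n - 1 -> y a = n - 1.

Lemma hom_order x a b :
  is_hom n A x -> (x a <= x b <-> x (himp A a b) = n - 1).
Proof.
  intros (Hb & _ & _ & _ & _ & Hi). rewrite Hi. unfold Cimp.
  specialize (Hb a). destruct (Nat.leb_spec (x a) (x b)); lia.
Qed.

Lemma hom_postcomp (R : nat -> Prop) (psi : nat -> nat) x :
  is_hom n A x -> (forall a, R (x a)) ->
  psi 0 = 0 -> psi (n - 1) = n - 1 ->
  (forall u, u < n -> R u -> psi u < n) ->
  (forall u v, u <= v < n -> R u -> R v -> psi u <= psi v) ->
  (forall u v, v < u < n -> R u -> R v -> psi v < psi u \/ psi v = n - 1) ->
  is_hom n A (fun a => psi (x a)).
Proof.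
  intros (Hb & H0 & Ht & Hm & Hj & Hi) HR P0 P1 Pb Pmon Pstr.
  assert (Mon : forall a b, x a <= x b -> psi (x a) <= psi (x b))
    by (intros a b h; apply Pmon; [split; [exact h | apply Hb] | apply HR | apply HR]).
  split; [|split; [|split; [|split; [|split]]]].
  - intros a. apply Pb; auto.
  - rewrite H0; exact P0.
  - rewrite Ht; exact P1.
  - intros a b. rewrite Hm.
    destruct (Nat.le_ge_cases (x a) (x b)) as [h|h]; pose proof (Mon _ _ h);
      [rewrite (Nat.min_l _ _ h) | rewrite (Nat.min_r _ _ h)]; lia.
  - intros a b. rewrite Hj.
    destruct (Nat.le_ge_cases (x a) (x b)) as [h|h]; pose proof (Mon _ _ h);
      [rewrite (Nat.max_r _ _ h) | rewrite (Nat.max_l _ _ h)]; lia.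
  - intros a b. rewrite Hi. unfold Cimp.
    destruct (Nat.leb_spec (x a) (x b)) as [h|h].
    + rewrite P1. pose proof (Mon _ _ h).
      destruct (Nat.leb_spec (psi (x a)) (psi (x b))); lia.
    + destruct (Nat.leb_spec (psi (x a)) (psi (x b))); [|reflexivity].
      destruct (Pstr (x a) (x b)); auto; lia.
Qed.

(* The partial map g_i, made total: level i+1 drops to the empty level i. *)
Definition close_gap (i t : nat) : nat := if t =? i + 1 then i else t.
Definition truncate (j t : nat) : nat := if j <=? t then n - 1 else t.
Definition raise_level (u t : nat) : nat := if t =? u then n - 2 else t.

Lemma close_gap_hom x i :
  is_hom n A x -> i + 2 < n -> (forall a, x a <> i) ->
  is_hom n A (fun a => close_gap i (x a)).
Proof.
  intros Hx Hi Hgap.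
  apply (hom_postcomp (fun t => t <> i)); auto; unfold close_gap;
    intros; nat_cases.
Qed.

Lemma truncate_hom x j :
  is_hom n A x -> 1 <= j -> is_hom n A (fun a => truncate j (x a)).
Proof.
  intros Hx Hj.
  apply (hom_postcomp (fun _ => True)); auto; unfold truncate; intros; nat_cases.
Qed.

Lemma raise_level_hom x u :
  is_hom n A x -> 1 <= u <= n - 2 -> (forall a, x a <= u \/ x a = n - 1) ->
  is_hom n A (fun a => raise_level u (x a)).
Proof.
  intros Hx Hu Hrange.
  apply (hom_postcomp (fun t => t <= u \/ t = n - 1)); auto; unfold raise_level;
    intros; nat_cases.
Qed.

Lemma hmap_hom x k :
  is_hom n A x -> 1 <= k -> is_hom n A (fun a => hmap n k (x a)).
Proof.
  intros Hx Hk.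
  apply (hom_postcomp (fun _ => True)); auto; unfold hmap; intros; nat_cases.
Qed.

Lemma hmap_top_iff k t :
  t < n -> 1 <= k <= n - 2 -> (hmap n k t = n - 1 <-> n - 2 <= t).
Proof. intros. unfold hmap. nat_cases. Qed.

Lemma truncate_top_iff j t :
  t < n -> j <= n - 1 -> (truncate j t = n - 1 <-> j <= t).
Proof. intros. unfold truncate. nat_cases. Qed.

Lemma raise_level_top_iff u t :
  2 <= n -> u < n - 1 -> (raise_level u t = n - 1 <-> t = n - 1).
Proof. intros. unfold raise_level. nat_cases. Qed.

End Homomorphisms.

Section Equivalence.
Variables (n : nat) (A : HSig) (fs : nat -> bool).
Hypothesis Hn : 4 <= n.

Lemma sigma_fixes_top i u v :
  1 <= i <= n - 3 -> sig_i fs i u = Some v -> (u = n - 1 <-> v = n - 1).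
Proof.
  intros Hi. unfold sig_i, gmap, fmap.
  destruct (fs i); split_comparisons; intros E; inversion E; lia.
Qed.

Lemma sim_sym x y : sim n A fs x y -> sim n A fs y x.
Proof.
  induction 1 as [x y (Hx & Hy & i & Hi & Hxy)| |]; [|apply rt_refl|eapply rt_trans; eauto].
  apply rt_step. split; [exact Hy | split; [exact Hx|]]. exists i. tauto.
Qed.

Lemma sim_same_top x y : sim n A fs x y -> same_top n A x y.
Proof.
  induction 1 as [x y (_ & _ & i & Hi & [H|H])|x|x y z _ IH1 _ IH2]; intros a.
  - exact (sigma_fixes_top i _ _ Hi (H a)).
  - symmetry. exact (sigma_fixes_top i _ _ Hi (H a)).
  - tauto.
  - rewrite (IH1 a). apply IH2.
Qed.

(* Closing an empty level i is a single sigma_i-step (forwards for g_i,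
   backwards for f_i). *)
Lemma close_gap_step x i :
  is_hom n A x -> 1 <= i <= n - 3 -> (forall a, x a <> i) ->
  step n A fs x (fun a => close_gap i (x a)).
Proof.
  intros Hx Hi Hgap.
  split; [exact Hx | split; [apply close_gap_hom; auto; lia|]].
  exists i. split; [exact Hi|]. unfold sig_i.
  destruct (fs i); [right|left]; intros a; specialize (Hgap a);
    unfold fmap, gmap, close_gap; destruct (Nat.eqb_spec (x a) (i + 1));
    split_comparisons; f_equal; lia.
Qed.

Definition level_weight (x : A -> nat) (v : nat) : nat :=
  if excluded_middle_informative (exists a, x a = v) then v else 0.
Definition weight (x : A -> nat) : nat := msum (level_weight x) n.

Lemma level_weight_occupied x v : (exists a, x a = v) -> level_weight x v = v.
Proof.
  unfold level_weight. destruct (excluded_middle_informative _); tauto.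
Qed.

Lemma level_weight_empty x v : ~ (exists a, x a = v) -> level_weight x v = 0.
Proof.
  unfold level_weight. destruct (excluded_middle_informative _); tauto.
Qed.

Lemma close_gap_weight x i :
  i + 1 < n -> (forall a, x a <> i) -> (exists a, x a = i + 1) ->
  weight (fun a => close_gap i (x a)) < weight x.
Proof.
  intros Hi Hgap [a1 Ha1].
  set (y := fun a => close_gap i (x a)).
  assert (Hy : forall a, y a = if x a =? i + 1 then i else x a) by reflexivity.
  (* level i is traded for level i + 1; all other levels are unchanged *)
  assert (Hbal : forall v, v < n ->
    level_weight x v + (if v =? i then i else 0) =
    level_weight y v + (if v =? i + 1 then i + 1 else 0)).
  { intros v _.
    destruct (Nat.eq_dec v i) as [->|Hvi]; [|destruct (Nat.eq_dec v (i + 1)) as [->|Hvi1]].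
    - rewrite level_weight_empty, level_weight_occupied.
      + nat_cases.
      + exists a1. rewrite Hy, Ha1. nat_cases.
      + intros [a Ha]. exact (Hgap a Ha).
    - rewrite level_weight_occupied, level_weight_empty by
        (eauto || (intros [a Ha]; rewrite Hy in Ha; revert Ha; nat_cases)).
      nat_cases.
    - assert (Same : (exists a, x a = v) <-> (exists a, y a = v)).
      { split; intros [a Ha]; exists a; rewrite Hy in *; revert Ha; nat_cases. }
      destruct (classic (exists a, x a = v)) as [Hocc|Hemp].
      + rewrite !level_weight_occupied by tauto. nat_cases.
      + rewrite !level_weight_empty by tauto. nat_cases. }
  pose proof (msum_balance _ _ _ _ n Hbal) as E.
  rewrite !msum_single in E. unfold weight. fold y. revert E. nat_cases.
Qed.

(* Below the top, every occupied level >= 2 has an occupied level just under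
   it (level 0 is always occupied, level 1 can never be emptied). *)
Definition gapless (x : A -> nat) : Prop :=
  forall v, 2 <= v <= n - 2 -> (exists a, x a = v) -> exists b, x b = v - 1.

Lemma gapless_reachable x :
  is_hom n A x -> exists x', sim n A fs x x' /\ is_hom n A x' /\ gapless x'.
Proof.
  induction x as [x IH] using (well_founded_induction (well_founded_ltof _ weight)).
  intros Hx.
  destruct (classic (exists v, 2 <= v <= n - 2 /\ (exists a, x a = v) /\
                                ~ exists b, x b = v - 1))
    as [[v (Hv & Hocc & Hemp)]|Hnone].
  - assert (Hgap : forall a, x a <> v - 1) by (intros a Ha; eauto).
    replace v with (v - 1 + 1) in Hocc by lia.
    destruct (IH (fun a => close_gap (v - 1) (x a))) as (x' & Hsim & Hx' & Hgl).
    + apply close_gap_weight; auto; lia.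
    + apply close_gap_hom; auto; lia.
    + exists x'. split; [|auto].
      eapply rt_trans; [apply rt_step, close_gap_step|]; eauto; lia.
  - exists x. split; [apply rt_refl|split; [exact Hx|]].
    intros v Hv Hocc. apply NNPP. intros Hemp. eauto.
Qed.

Lemma gapless_below x c u :
  gapless x -> 1 <= u <= x c -> x c <= n - 2 -> exists b, x b = u.
Proof.
  intros Hgl. remember (x c - u) as d eqn:Hd. revert c Hd.
  induction d as [|d IH]; intros c Hd Hu Hc; [exists c; lia|].
  destruct (Hgl (x c)) as [b Hb]; [lia|eauto|].
  apply (IH b); lia.
Qed.

Lemma same_top_order x y a b :
  is_hom n A x -> is_hom n A y -> same_top n A x y ->
  (x a <= x b <-> y a <= y b).
Proof.
  intros Hx Hy Hxy. rewrite (hom_order n A x), (hom_order n A y) by auto.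
  apply Hxy.
Qed.

(* A gapless homomorphism is determined by its top fibre: the levels below
   the top are matched one by one from 0 upwards. *)
Lemma gapless_unique x y :
  is_hom n A x -> is_hom n A y -> gapless x -> gapless y ->
  same_top n A x y -> x = y.
Proof.
  intros Hx Hy Gx Gy Hxy.
  assert (Hlt : forall a b, x a < x b <-> y a < y b).
  { intros a b. rewrite !Nat.lt_nge, (same_top_order x y) by auto. tauto. }
  pose proof (proj1 Hx) as Bx. pose proof (proj1 Hy) as By.
  pose proof (proj1 (proj2 Hx)) as Zx. pose proof (proj1 (proj2 Hy)) as Zy.
  assert (Below : forall v a, x a = v -> v < n - 1 -> y a = v).
  { induction v as [v IH] using lt_wf_ind. intros a Ha Hv.
    destruct v as [|v].
    - pose proof (proj2 (Hlt (hbot A) a)). lia.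
    - assert (Hb : exists b, x b = v).
      { destruct v as [|v]; [exists (hbot A); exact Zx|].
        apply (gapless_below x a); auto; lia. }
      destruct Hb as [b Hb].
      assert (Eb : y b = v) by (apply (IH v); auto; lia).
      assert (y b < y a) by (apply Hlt; lia).
      assert (y a <> n - 1) by (intros E; apply Hxy in E; lia).
      destruct (Nat.eq_dec (y a) (S v)) as [|Hne]; [assumption|].
      assert (Hc : exists c, y c = S v)
        by (apply (gapless_below y a); auto; specialize (By a); lia).
      destruct Hc as [c Hc].
      assert (x b < x c < x a) by (split; apply Hlt; lia).
      lia. }
  apply functional_extensionality. intros a.
  destruct (Nat.eq_dec (x a) (n - 1)) as [E|E].
  - rewrite E. symmetry. apply Hxy, E.
  - symmetry. apply Below; auto. specialize (Bx a). lia.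
Qed.

Theorem sim_iff_same_top x y :
  is_hom n A x -> is_hom n A y -> (sim n A fs x y <-> same_top n A x y).
Proof.
  intros Hx Hy. split; [apply sim_same_top|intros Hxy].
  destruct (gapless_reachable x Hx) as (x' & Sx & Hx' & Gx).
  destruct (gapless_reachable y Hy) as (y' & Sy & Hy' & Gy).
  assert (x' = y') as <-.
  { apply gapless_unique; auto. intros a.
    rewrite <- (sim_same_top _ _ Sx a), <- (sim_same_top _ _ Sy a). apply Hxy. }
  eapply rt_trans; [exact Sx | apply sim_sym, Sy].
Qed.

End Equivalence.

Section Order.
Variables (n : nat) (A : HSig) (fs : nat -> bool) (k : nat).
Hypothesis Hn : 4 <= n.
Hypothesis Hk : 1 <= k <= n - 2.

(* h_k fixes the top, so <= can only enlarge top fibres. *)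
Lemma le_top_incl x y : le n A fs k x y -> top_incl n A x y.
Proof.
  induction 1 as [x y [Hs|(_ & z & _ & Hzx & Hzy)]|x|x y z _ IH1 _ IH2];
    intros a Ha; auto.
  - apply (sim_same_top n A fs Hn x y Hs a), Ha.
  - apply (sim_same_top n A fs Hn _ _ Hzy a).
    apply (sim_same_top n A fs Hn _ _ Hzx a) in Ha. rewrite Ha.
    unfold hmap. nat_cases.
Qed.

(* Top fibres of homomorphisms are prime filters, so a larger top fibre is a
   threshold set  {a | j <= x a}  of x, with 1 <= j <= n-1. *)
Lemma top_threshold x y :
  is_hom n A x -> is_hom n A y -> top_incl n A x y ->
  exists j, 1 <= j <= n - 1 /\ forall a, y a = n - 1 <-> j <= x a.
Proof.
  intros Hx Hy Hxy.
  set (P := fun v => exists a, y a = n - 1 /\ x a = v).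
  destruct (dec_inh_nat_subset_has_unique_least_element P)
    as (j & ((b & Hyb & Hxb) & Hmin) & _).
  { intros v. apply classic. }
  { exists (x (htop A)), (htop A). split; [apply Hy|reflexivity]. }
  assert (Hmon : forall a b, x a <= x b -> y a <= y b).
  { intros a a' H. apply (hom_order n A y); auto.
    apply Hxy, (hom_order n A x); auto. }
  pose proof (proj1 Hx b) as Bxb.
  exists j. split; [split|].
  - destruct j; [|lia].
    pose proof (Hmon b (hbot A)) as H. rewrite (proj1 (proj2 Hx)), (proj1 (proj2 Hy)) in H.
    lia.
  - lia.
  - intros a. split; intros H.
    + apply Hmin. exists a. auto.
    + pose proof (Hmon b a ltac:(lia)). pose proof (proj1 Hy a). lia.
Qed.

(* The basic prec-step: if T(y) = {a | j <= w a} and w has at most one level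
   u in [j, n-2], then raising u to n-2 gives a representative z of [w] whose
   image under h_k has top fibre T(y); so [w] prec [y] unless [w] = [y]. *)
Lemma one_level_prec w y j u :
  is_hom n A w -> is_hom n A y -> (forall a, y a = n - 1 <-> j <= w a) ->
  1 <= j <= u -> u <= n - 2 -> (forall a, j <= w a <= n - 2 -> w a = u) ->
  ~ sim n A fs w y -> prec n A fs k w y.
Proof.
  intros Hw Hy Hwy Hj Hu Hsingle Hns. split; [exact Hns|].
  pose proof (proj1 Hw) as Bw.
  assert (Hlevels : forall a, w a <= u \/ w a = n - 1).
  { intros a. specialize (Bw a). specialize (Hsingle a). lia. }
  set (z := fun a => raise_level n u (w a)).
  assert (Hz : is_hom n A z) by (apply raise_level_hom; auto; lia).
  exists z. split; [exact Hz|split].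
  - apply sim_iff_same_top; auto. intros a. apply raise_level_top_iff; lia.
  - apply sim_iff_same_top; auto; [apply hmap_hom; auto; lia|].
    intros a. rewrite hmap_top_iff, Hwy by (apply Hz || lia).
    specialize (Bw a). specialize (Hsingle a). specialize (Hlevels a).
    unfold z, raise_level. nat_cases.
Qed.

(* x lies below each of its truncations: lowering the truncation level from
   j+1 to j is a single sim- or prec-step. *)
Lemma truncation_above x j :
  is_hom n A x -> 1 <= j <= n - 1 -> le n A fs k x (fun a => truncate n j (x a)).
Proof.
  intros Hx Hj. pose proof (proj1 Hx) as Bx.
  remember (n - 1 - j) as d eqn:Hd. revert j Hj Hd.
  induction d as [|d IH]; intros j Hj Hd.
  - apply rt_step. left. apply sim_iff_same_top; auto; [apply truncate_hom; auto; lia|].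
    intros a. rewrite truncate_top_iff by (auto || lia). specialize (Bx a). lia.
  - eapply rt_trans; [apply (IH (j + 1)); lia|]. apply rt_step.
    set (w := fun a => truncate n (j + 1) (x a)).
    assert (Hw : is_hom n A w) by (apply truncate_hom; auto; lia).
    assert (Hwj : forall a, truncate n j (x a) = n - 1 <-> j <= w a).
    { intros a. specialize (Bx a). unfold w, truncate. nat_cases. }
    destruct (classic (sim n A fs w (fun a => truncate n j (x a)))) as [S|Hns];
      [left; exact S|right].
    apply (one_level_prec _ _ j j); auto; try lia.
    + apply truncate_hom; auto; lia.
    + intros a. specialize (Bx a). unfold w, truncate. nat_cases.
Qed.

Lemma top_incl_le x y :
  is_hom n A x -> is_hom n A y -> top_incl n A x y -> le n A fs k x y.
Proof.
  intros Hx Hy Hxy.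
  destruct (top_threshold x y Hx Hy Hxy) as (j & Hj & Hthr).
  eapply rt_trans; [apply (truncation_above x j); auto|].
  apply rt_step. left. apply sim_iff_same_top; auto; [apply truncate_hom; auto; lia|].
  intros a. rewrite truncate_top_iff, Hthr by (apply Hx || lia). tauto.
Qed.

Theorem le_iff_top_incl x y :
  is_hom n A x -> is_hom n A y -> (le n A fs k x y <-> top_incl n A x y).
Proof.
  intros Hx Hy. split; [apply le_top_incl|apply top_incl_le; auto].
Qed.

(* Distinct classes above [p] have distinct thresholds in 1..n-1, so the
   up-set of any class has at most n-1 elements. *)
Theorem up_set_size p m (c : nat -> A -> nat) :
  is_hom n A p ->
  (forall i, i < m -> is_hom n A (c i) /\ le n A fs k p (c i)) ->
  (forall i i', i < m -> i' < m -> i <> i' -> ~ sim n A fs (c i) (c i')) ->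
  m <= n - 1.
Proof.
  intros Hp Hc Hdistinct.
  destruct (choice (fun i j => i < m ->
              1 <= j <= n - 1 /\ forall a, c i a = n - 1 <-> j <= p a))
    as (thr & Hthr).
  { intros i. destruct (lt_dec i m) as [Hi|Hi]; [|exists 0; lia].
    destruct (Hc i Hi) as [Hci Hle].
    destruct (top_threshold p (c i)) as (j & Hj); auto using le_top_incl.
    exists j. auto. }
  apply (pigeonhole m (n - 1) (fun i => thr i - 1)).
  - intros i Hi. specialize (Hthr i Hi). lia.
  - intros i i' Hi Hi' E. destruct (Nat.eq_dec i i') as [|Hne]; [assumption|].
    exfalso. apply (Hdistinct i i' Hi Hi' Hne).
    destruct (Hthr i Hi) as [Hj Hcj], (Hthr i' Hi') as [Hj' Hcj'].
    apply sim_iff_same_top; try apply Hc; auto.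
    intros a. rewrite Hcj, Hcj'. replace (thr i') with (thr i) by lia. tauto.
Qed.

(* [x] prec [y] makes [y] an upper cover of [x]: any class in between has a
   top fibre containing that of a representative z0 of [x], hence is [x] or
   contains {n-2 <= z0} = T(y). *)
Lemma prec_is_cover x y z :
  is_hom n A x -> is_hom n A y -> is_hom n A z -> prec n A fs k x y ->
  le n A fs k x z -> le n A fs k z y -> sim n A fs z x \/ sim n A fs z y.
Proof.
  intros Hx Hy Hz [_ (z0 & Hz0 & Hz0x & Hz0y)] Hxz Hzy.
  pose proof (proj1 Hz0) as Bz0.
  apply sim_same_top in Hz0x, Hz0y; auto.
  apply le_top_incl in Hxz, Hzy.
  assert (Hincl : top_incl n A z0 z) by (intros a Ha; apply Hxz, Hz0x, Ha).
  destruct (top_threshold z0 z Hz0 Hz Hincl) as (j & Hj & Hthr).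
  destruct (Nat.eq_dec j (n - 1)) as [->|Hj'].
  - left. apply sim_iff_same_top; auto. intros a.
    rewrite Hthr, <- (Hz0x a). specialize (Bz0 a). lia.
  - right. apply sim_iff_same_top; auto. intros a. split; [apply Hzy|].
    intros Ha. apply Hthr. apply Hz0y in Ha. rewrite hmap_top_iff in Ha by auto.
    lia.
Qed.

(* Conversely an upper cover [y] of [x] is reached by one prec-step: if x
   had two levels lo < hi between the threshold of y and n-2, truncating x
   at hi would give a class strictly between [x] and [y]. *)
Lemma cover_is_prec x y :
  is_hom n A x -> is_hom n A y -> le n A fs k x y -> ~ sim n A fs x y ->
  (forall z, is_hom n A z -> le n A fs k x z -> le n A fs k z y ->
     sim n A fs z x \/ sim n A fs z y) ->
  prec n A fs k x y.
Proof.
  intros Hx Hy Hxy Hns Hcover. pose proof (proj1 Hx) as Bx.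
  destruct (top_threshold x y Hx Hy (le_top_incl _ _ Hxy)) as (j & Hj & Hthr).
  assert (Hsame : (forall a, j <= x a -> x a = n - 1) -> sim n A fs x y).
  { intros Hnone. apply sim_iff_same_top; auto. intros a.
    rewrite Hthr. specialize (Hnone a). lia. }
  assert (Hj' : j <= n - 2).
  { destruct (Nat.eq_dec j (n - 1)); [|lia].
    exfalso. apply Hns, Hsame. intros a. specialize (Bx a). lia. }
  assert (Htwo_levels : forall lo hi, j <= lo < hi -> hi <= n - 2 ->
                      (exists a, x a = lo) -> (exists a, x a = hi) -> False).
  { intros lo hi Hlo Hhi [alo Halo] [ahi Hahi].
    set (t := fun a => truncate n hi (x a)).
    assert (Ht : is_hom n A t) by (apply truncate_hom; auto; lia).
    assert (Htop : forall a, t a = n - 1 <-> hi <= x a)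
      by (intros a; apply truncate_top_iff; auto; lia).
    destruct (Hcover t Ht) as [S|S].
    - apply top_incl_le; auto. intros a Ha. apply Htop. lia.
    - apply top_incl_le; auto. intros a Ha. apply Hthr. apply Htop in Ha. lia.
    - assert (Htahi : t ahi = n - 1) by (apply Htop; lia).
      apply (sim_same_top _ _ _ Hn _ _ S ahi) in Htahi. lia.
    - assert (Hyalo : y alo = n - 1) by (apply Hthr; lia).
      apply (sim_same_top _ _ _ Hn _ _ S alo), Htop in Hyalo. lia. }
  assert (Hocc : exists au, j <= x au <= n - 2).
  { apply NNPP. intros Hnone. apply Hns, Hsame. intros a Ha. specialize (Bx a).
    destruct (Nat.eq_dec (x a) (n - 1)); [assumption|].
    exfalso. apply Hnone. exists a. lia. }
  destruct Hocc as [au Hau].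
  apply (one_level_prec x y j (x au)); eauto; try lia.
  intros a Ha. destruct (Nat.lt_total (x a) (x au)) as [Hlt|[Heq|Hgt]]; auto.
  - exfalso. apply (Htwo_levels (x a) (x au)); eauto; lia.
  - exfalso. apply (Htwo_levels (x au) (x a)); eauto; lia.
Qed.

End Order.

Theorem lemma4p2 (n : nat) (Hn : 4 <= n) (A : HSig) (HA : in_Gn n A) :
  (forall (fs : nat -> bool) (k : nat) (fs' : nat -> bool) (k' : nat),
     1 <= k <= n - 2 -> 1 <= k' <= n - 2 ->
     (forall x y, is_hom n A x -> is_hom n A y ->
        (sim n A fs x y <-> sim n A fs' x y)) /\
     (forall x y, is_hom n A x -> is_hom n A y ->
        (le n A fs k x y <-> le n A fs' k' x y))) /\
  (forall (fs : nat -> bool) (k : nat), 1 <= k <= n - 2 ->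
     (forall x, is_hom n A x -> le n A fs k x x) /\
     (forall x y z, is_hom n A x -> is_hom n A y -> is_hom n A z ->
        le n A fs k x y -> le n A fs k y z -> le n A fs k x z) /\
     (forall x y, is_hom n A x -> is_hom n A y ->
        le n A fs k x y -> le n A fs k y x -> sim n A fs x y) /\
     (forall (p : A -> nat) (m : nat) (c : nat -> A -> nat),
        is_hom n A p ->
        (forall i, i < m -> is_hom n A (c i) /\ le n A fs k p (c i)) ->
        (forall i j, i < m -> j < m -> i <> j -> ~ sim n A fs (c i) (c j)) ->
        (forall i j, i < m -> j < m ->
           le n A fs k (c i) (c j) \/ le n A fs k (c j) (c i)) ->
        m - 1 <= n - 2) /\
     (forall x y, is_hom n A x -> is_hom n A y ->
        (prec n A fs k x y <->
          (le n A fs k x y /\ ~ sim n A fs x y /\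
           forall z, is_hom n A z -> le n A fs k x z -> le n A fs k z y ->
             sim n A fs z x \/ sim n A fs z y)))).
Proof.
  split.
  - (* both relations are described by top fibres alone *)
    intros fs k fs' k' Hk Hk'. split; intros x y Hx Hy.
    + rewrite !sim_iff_same_top by auto. reflexivity.
    + rewrite (le_iff_top_incl n A fs k), (le_iff_top_incl n A fs' k') by auto.
      reflexivity.
  - intros fs k Hk. split; [|split; [|split; [|split]]].
    + intros x _. apply rt_refl.
    + intros x y z _ _ _. apply rt_trans.
    + intros x y Hx Hy Hxy Hyx. apply sim_iff_same_top; auto.
      apply le_iff_top_incl in Hxy, Hyx; auto. intros a. split; auto.
    + intros p m c Hp Hc Hdistinct _.
      pose proof (up_set_size n A fs k Hn Hk p m c Hp Hc Hdistinct). lia.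
    + intros x y Hx Hy. split.
      * intros Hp. split; [apply rt_step; right; exact Hp|].
        split; [apply Hp|]. intros z Hz. apply prec_is_cover; auto.
      * intros (Hxy & Hns & Hcover). apply cover_is_prec; auto.
Qed.
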